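(* Let $r$ and $k$ be positive integers with $k>r$, let $H$ be the complete graph of order $r+k$, and let $\mathbf{E}=(E_0,E_1,E_2)$ be an ordered partition of $E(H)$. Then (1) if $r<k\le\frac{3r-7}{2}$ and $|E_1|+2|E_2|<\min\left\{\frac12(k+3r-4)(k-r+3),\ (k-r+2)(k+r-1)\right\}$, then $H$ has a good matching for $\mathbf{E}$ of order $r$; and (2) if $k>\frac{3r-7}{2}$ and $|E_1|+2|E_2|<\min\left\{\frac12(k+1)(k+2),\ (k-r+2)(k+r-1)\right\}$, then $H$ has a good matching for $\mathbf{E}$ of order $r$.
   Context: An ordered partition $(E_0,E_1,E_2)$ of a set is a triple of pairwise disjoint (possibly empty) sets with that union. A matching $M$ is a good matching for $\mathbf{E}$ if $M\cap E_2=\emptyset$ and $|M\cap E_1|\le1$; the order of a matching is its number of edges. *)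

From mathcomp Require Import all_boot.
Set Implicit Arguments. Unset Strict Implicit. Unset Printing Implicit Defensive.

Definition Kedges (n : nat) : {set {set 'I_n}} := [set e : {set 'I_n} | #|e| == 2].

Definition ordered_partition (n : nat) (E0 E1 E2 : {set {set 'I_n}}) : Prop :=
  [/\ [disjoint E0 & E1], [disjoint E0 & E2], [disjoint E1 & E2]
    & E0 :|: E1 :|: E2 = Kedges n].

Definition is_matching (n : nat) (M : {set {set 'I_n}}) : Prop :=
  M \subset Kedges n /\
  forall e f : {set 'I_n}, e \in M -> f \in M -> e != f -> [disjoint e & f].

Definition good_matching (n : nat) (E1 E2 M : {set {set 'I_n}}) : Prop :=
  is_matching M /\ M :&: E2 = set0 /\ #|M :&: E1| <= 1.

From mathcomp Require Import all_boot perm zify.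
From Stdlib Require Import Classical_Prop.
Set Implicit Arguments. Unset Strict Implicit. Unset Printing Implicit Defensive.

(* Suppose that there is no good matching with [r] edges and let [G0] be the graph
   of the edges in [E0].

   If [G0] has a matching with [r - 1] edges, let [U] be the set of its [k - r + 2]
   unmatched vertices.  Every pair inside [U] lies in [E2], and for every matching
   edge [ab] and distinct [u], [v] in [U] the pairs [ua], [vb] have total weight at
   least 2 (weight 1 on [E1], 2 on [E2]), since otherwise exchanging [ab] for [ua] and
   [vb] gives a good matching.  Summing the weights at [U] gives
   [|E1| + 2|E2| >= (k - r + 2)(k + r - 1)].

   Otherwise [G0] has no matching with [r - 1] edges, and by the Erdos-Gallai theorem
   [|E0| <= C(2r-3-i, 2) + i (k - r + 3 + i)] for some [i <= r - 2].  The theorem is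
   proved by Kelmans compressions, which keep the number of edges and create no larger
   matching; once no compression applies, the vertices [i] and [2r-3-i] are
   non-adjacent for some [i], and this caps every degree.  As
   [|E0| + |E1| + |E2| = C(r + k, 2)], the weight [|E1| + 2|E2|] is then too large in
   both ranges of [k]. *)

Definition deg (T : finType) (R : rel T) (x : T) : nat := \sum_y R x y.

Lemma deg_le_sum (T : finType) (R : rel T) (P : pred T) (x : T) :
  irreflexive R -> (forall y, R x y -> P y) -> deg R x + P x <= \sum_y P y.
Proof.
move=> irrR RP; rewrite /deg (bigD1 x) //= [leqRHS](bigD1 x) //= irrR addnC leq_add2l.
by apply: leq_sum => y _; case: (boolP (R x y)) => // /RP ->.
Qed.

Lemma sum_split2 (T : finType) (i j : T) (F : T -> nat) : i != j ->
  \sum_y F y = F i + F j + \sum_(y | (y != i) && (y != j)) F y.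
Proof.
move=> nij; rewrite (bigD1 i) //= (bigD1 j) 1?eq_sym //= addnA.
by congr (_ + _); apply: eq_bigl => y; rewrite andbC.
Qed.

(* Kelmans' compression of R moving the neighbours of j towards i. *)
Definition compress (T : finType) (R : rel T) (i j : T) : rel T := fun x y =>
  if (x == i) && (y != i) && (y != j) then R i y || R j y
  else if (x == j) && (y != i) && (y != j) then R i y && R j y
  else if (y == i) && (x != i) && (x != j) then R x i || R x j
  else if (y == j) && (x != i) && (x != j) then R x i && R x j
  else R x y.

Section Compression.

Variables (T : finType) (R : rel T) (i j : T).
Hypotheses (neq_ij : i != j) (symR : symmetric R).

Local Notation S := (compress R i j).
Local Notation swap := (tperm i j).

Lemma compress_sym : symmetric S.
Proof.
have nji : j != i by rewrite eq_sym.
move=> x y; rewrite /compress.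
case: (tpermP i j x) => [->|->|/eqP/negPf xi /eqP/negPf xj];
  case: (tpermP i j y) => [->|->|/eqP/negPf yi /eqP/negPf yj];
  rewrite ?eqxx ?(negPf neq_ij) ?(negPf nji) ?xi ?xj ?yi ?yj //=.
all: by rewrite (symR i) (symR j).
Qed.

Lemma compress_irr : irreflexive R -> irreflexive S.
Proof.
move=> irrR x; rewrite /compress.
by case: (tpermP i j x) => [->|->|/eqP/negPf xi /eqP/negPf xj]; rewrite ?eqxx ?andbF ?xi ?xj ?irrR.
Qed.

Lemma compress_out x y : x != i -> x != j -> y != i -> y != j -> S x y = R x y.
Proof. by move=> /negPf xi /negPf xj /negPf yi /negPf yj; rewrite /compress xi xj yi yj. Qed.

Lemma compress_addr x : x != i -> x != j -> S x i + S x j = R x i + R x j.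
Proof.
move=> /negPf xi /negPf xj; rewrite /compress xi xj eqxx (eq_sym j) (negPf neq_ij) /= eqxx.
by case: (R x i); case: (R x j).
Qed.

Lemma compress_addl y : S i y + S j y = R i y + R j y.
Proof.
rewrite /compress eqxx (negPf neq_ij) (eq_sym j) (negPf neq_ij) eqxx /=.
case: (y =P i) => [->|_]; first by rewrite ?eqxx ?andbF.
case: (y =P j) => [->|_]; first by rewrite ?eqxx ?andbF.
by case: (R i y); case: (R j y).
Qed.

Lemma compress_deg_out x : x != i -> x != j -> deg S x = deg R x.
Proof.
move=> xi xj; rewrite /deg (sum_split2 (S x) neq_ij) (sum_split2 (R x) neq_ij).
rewrite compress_addr //; congr (_ + _).
by apply: eq_bigr => y /andP [yi yj]; rewrite compress_out.
Qed.

Lemma compress_degD : deg S i + deg S j = deg R i + deg R j.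
Proof. by rewrite /deg -!big_split /=; apply: eq_bigr => y _; rewrite compress_addl. Qed.

Lemma compress_deg_sum : \sum_x deg S x = \sum_x deg R x.
Proof.
rewrite (sum_split2 (deg S) neq_ij) (sum_split2 (deg R) neq_ij) compress_degD.
by congr (_ + _); apply: eq_bigr => x /andP [xi xj]; rewrite compress_deg_out.
Qed.

Lemma compress_deg_lt y : y != i -> y != j -> R j y -> ~~ R i y -> deg R i < deg S i.
Proof.
move=> yi yj Rjy /negPf Riy; rewrite /deg (bigD1 y) //= [ltnRHS](bigD1 y) //=.
rewrite /compress eqxx yi yj Rjy Riy orbT add0n add1n ltnS.
apply: leq_sum => z _; rewrite (negPf neq_ij) /= !andbF.
by case: ifP => _ //; case: (R i z).
Qed.

Lemma compress_weighted_deg (c : T -> nat) y : c i < c j ->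
    y != i -> y != j -> R j y -> ~~ R i y ->
  \sum_x c x * deg S x < \sum_x c x * deg R x.
Proof.
move=> cij yi yj Rjy Riy.
have lt_i := compress_deg_lt yi yj Rjy Riy; have eqD := compress_degD.
rewrite (sum_split2 (fun x => c x * deg S x) neq_ij).
rewrite (sum_split2 (fun x => c x * deg R x) neq_ij).
rewrite (eq_bigr (fun x => c x * deg R x)); last first.
  by move=> x /andP [xi xj]; rewrite compress_deg_out.
rewrite ltn_add2r; nia.
Qed.

Lemma compress_edge x y : S x y -> R x y || R (swap x) (swap y).
Proof.
rewrite /compress.
case: (tpermP i j x) => [->|->|/eqP/negPf xi /eqP/negPf xj];
  case: (tpermP i j y) => [->|->|/eqP/negPf yi /eqP/negPf yj];
  rewrite ?eqxx ?(negPf neq_ij) ?(eq_sym j i) ?(negPf neq_ij) ?xi ?xj ?yi ?yj /=.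
all: try by move=> ->.
all: by case/andP => -> ->; rewrite orbT.
Qed.

Lemma compress_edge_avoid x y : irreflexive R ->
  x != i -> y != i -> S x y -> R x y && R (swap x) (swap y).
Proof.
move=> irrR; rewrite /compress.
case: (tpermP i j x) => [->|->|/eqP/negPf xi /eqP/negPf xj];
  case: (tpermP i j y) => [->|->|/eqP/negPf yi /eqP/negPf yj];
  rewrite ?eqxx ?(negPf neq_ij) ?(eq_sym j i) ?(negPf neq_ij) ?xi ?xj ?yi ?yj ?irrR //=.
all: move=> _ _; try by move=> ->.
all: by case/andP => -> ->.
Qed.

End Compression.

Section Pairings.

Variable T : finType.
Implicit Types (R : rel T) (f : nat -> bool -> T).

(* A pairing [f] of length [t] lists [t] disjoint pairs of vertices:
   its [p]-th pair is [f p false], [f p true]; values at [p >= t] are junk. *)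
Definition pairing_inj t f :=
  forall p q s s', p < t -> q < t -> f p s = f q s' -> p = q /\ s = s'.

Definition rmatching R t f :=
  pairing_inj t f /\ forall p, p < t -> R (f p false) (f p true).

Lemma pairing_inj_comp (g : T -> T) t f :
  injective g -> pairing_inj t f -> pairing_inj t (fun p s => g (f p s)).
Proof. by move=> inj_g inj_f p q s s' pt qt /inj_g; exact: inj_f. Qed.

(* At most one pair of a matching of the compression contains [i]; that pair is
   an edge of [R] either as it stands or after swapping [i] and [j]. *)
Lemma rmatching_compress R (i j : T) t f : i != j -> irreflexive R ->
    rmatching (compress R i j) t f ->
  rmatching R t f \/ rmatching R t (fun p s => tperm i j (f p s)).
Proof.
move=> nij irrR [inj_f edge_f].
case: (boolP [forall p : 'I_t, R (f p false) (f p true)]) => [/forallP allR | ].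
  by left; split => // p pt; exact: (allR (Ordinal pt)).
rewrite negb_forall => /existsP [[p0 p0t] /= notR0].
right; split => [|p pt]; first exact: (pairing_inj_comp (@perm_inj _ _)).
have [s0 f_s0] : exists s0, f p0 s0 = i.
  case: (eqVneq (f p0 false) i) => [e|ne1]; first by exists false.
  case: (eqVneq (f p0 true) i) => [e|ne2]; first by exists true.
  have /andP [R0 _] := compress_edge_avoid nij irrR ne1 ne2 (edge_f p0 p0t).
  by rewrite R0 in notR0.
have [->|pp0] := eqVneq p p0.
  by have := compress_edge nij (edge_f p0 p0t); rewrite (negPf notR0).
have avoid s : f p s != i.
  apply/eqP => fpi; have [pp0' _] := inj_f p p0 s s0 pt p0t (etrans fpi (esym f_s0)).
  by rewrite pp0' eqxx in pp0.
by case/andP: (compress_edge_avoid nij irrR (avoid false) (avoid true) (edge_f p pt)).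
Qed.

Definition pair_edge f p : {set T} := [set f p false; f p true].

Definition extend f t (u v : T) : nat -> bool -> T :=
  fun q s => if q == t then (if s then v else u) else f q s.

Definition update f p (x : T) : nat -> bool -> T :=
  fun q s => if (q == p) && s then x else f q s.

Definition covered t f : {set T} := [set f p.1 p.2 | p : 'I_t * bool].

Lemma pairing_inj_extend t f u v : pairing_inj t f ->
    (forall q s, q < t -> f q s != u) -> (forall q s, q < t -> f q s != v) -> u != v ->
  pairing_inj t.+1 (extend f t u v).
Proof.
move=> inj_f fu fv uv p q s s'; rewrite !ltnS /extend.
case: (ltngtP p t) => // [pt|->]; case: (ltngtP q t) => // [qt|->] _ _.
- exact: inj_f.
- by case: s' => fq; [case/eqP: (fv p s pt) | case/eqP: (fu p s pt)].
- by case: s => fq; [case/eqP: (fv q s' qt) | case/eqP: (fu q s' qt)].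
- by case: s; case: s' => // e; rewrite e eqxx in uv.
Qed.

Lemma pairing_inj_update t f p x : pairing_inj t f ->
  (forall q s, q < t -> f q s != x) -> pairing_inj t (update f p x).
Proof.
move=> inj_f fx q q' s s' qt q't; rewrite /update.
case: ifP => [/andP [/eqP -> ->]|nq]; case: ifP => [/andP [/eqP -> ->] //|nq'].
- by move=> e; case/eqP: (fx q' s' q't).
- by move=> e; case/eqP: (fx q s qt).
- exact: inj_f.
Qed.

Lemma pair_edge_extend t f u v q : pair_edge (extend f t u v) q =
  if q == t then [set u; v] else pair_edge f q.
Proof. by rewrite /pair_edge /extend; case: ifP. Qed.

Lemma pair_edge_update f p x q : pair_edge (update f p x) q =
  if q == p then [set f p false; x] else pair_edge f q.
Proof. by rewrite /pair_edge /update; case: eqP => [->|]. Qed.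

Lemma pairing_inj_pairs t f : pairing_inj t f -> injective (fun p : 'I_t * bool => f p.1 p.2).
Proof.
move=> inj_f [p s] [q s'] /= e; have [pq ->] := inj_f p q s s' (ltn_ord p) (ltn_ord q) e.
by congr (_, _); apply: val_inj.
Qed.

Lemma card_covered t f : pairing_inj t f -> #|covered t f| = 2 * t.
Proof.
by move=> /pairing_inj_pairs inj_f; rewrite card_imset // card_prod card_ord card_bool mulnC.
Qed.

Lemma sum_covered t f (F : T -> nat) : pairing_inj t f ->
  \sum_(x in covered t f) F x = \sum_(p < t) (F (f p false) + F (f p true)).
Proof.
move=> /pairing_inj_pairs inj_f; rewrite big_imset /=; last exact: in2W.
rewrite -(pair_big xpredT xpredT (fun (p : 'I_t) (s : bool) => F (f p s))) /=.
by apply: eq_bigr => p _; rewrite big_bool addnC.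
Qed.

Lemma card_pair_edge t f p : pairing_inj t f -> p < t -> #|pair_edge f p| = 2.
Proof.
move=> inj_f pt; rewrite cards2; case: eqP => // e.
by have [_] := inj_f p p false true pt pt e.
Qed.

Lemma pair_edge_disjoint t f p q : pairing_inj t f -> p < t -> q < t -> p != q ->
  [disjoint pair_edge f p & pair_edge f q].
Proof.
move=> inj_f pt qt pq; apply/pred0P => x /=; apply/negP => /andP [].
rewrite !inE => /orP [] /eqP -> /orP [] /eqP e; have [epq _] := inj_f _ _ _ _ pt qt e;
  by rewrite epq eqxx in pq.
Qed.

Lemma notin_covered t f x : x \notin covered t f -> forall q s, q < t -> f q s != x.
Proof.
move=> xNc q s qt; apply: contraNneq xNc => <-.
by apply/imsetP; exists (Ordinal qt, s).
Qed.

End Pairings.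

Lemma sum_ord_lt n m : m <= n -> \sum_(y < n) (y < m : nat) = m.
Proof.
move=> mn; rewrite -(big_mkord xpredT (fun y => (y < m : nat))) (big_cat_nat (leq0n m) mn) /=.
rewrite (eq_big_nat _ _ (F2 := fun _ => 1)); last by move=> y /andP [_ ->].
rewrite [X in _ + X](eq_big_nat _ _ (F2 := fun _ => 0)); last first.
  by move=> y /andP [my _]; rewrite ltnNge my.
by rewrite !sum_nat_const_nat muln1 muln0 addn0 subn0.
Qed.

Lemma sum_ord_piecewise n a b u v w : a <= b <= n ->
  \sum_(x < n) (if x < a then u else if x < b then v else w) = a * u + (b - a) * v + (n - b) * w.
Proof.
case/andP=> ab bn.
rewrite -(big_mkord xpredT (fun x => if x < a then u else if x < b then v else w)).
rewrite (big_cat_nat (leq0n a) (leq_trans ab bn)) (big_cat_nat ab bn) /=.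
rewrite (eq_big_nat _ _ (F2 := fun _ => u)); last by move=> x /andP [_ ->].
rewrite [\sum_(a <= x < b) _](eq_big_nat _ _ (F2 := fun _ => v)); last first.
  by move=> x /andP [ax ->]; rewrite ltnNge ax.
rewrite [\sum_(b <= x < n) _](eq_big_nat _ _ (F2 := fun _ => w)); last first.
  by move=> x /andP [bx _]; rewrite !ltnNge bx (leq_trans ab bx).
by rewrite !sum_nat_const_nat subn0; lia.
Qed.

(* Twice the number of edges of a clique on [2s+1-i] vertices, [i] of which are
   moreover joined to all other vertices. *)
Definition eg_bound n s i := (2 * s + 1 - i) * (2 * s - i) + 2 * i * (n - (2 * s + 1 - i)).

Lemma eg_boundE n s i : i <= s -> 2 * s + 1 - i <= n ->
  eg_bound n s i =
  i * (n - 1) + (2 * s + 1 - i - i) * (2 * s + 1 - i - 1) + (n - (2 * s + 1 - i)) * i.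
Proof.
rewrite /eg_bound => le_is le_mn.
have [e se] : exists e, s = i + e by exists (s - i); lia.
have [d nd] : exists d, n = (i + 2 * e).+1 + d by exists (n - (2 * s + 1 - i)); lia.
subst s n.
have -> : 2 * (i + e) + 1 - i = (i + 2 * e).+1 by lia.
have -> : (i + 2 * e).+1 + d - 1 = i + 2 * e + d by lia.
have -> : (i + 2 * e).+1 + d - (i + 2 * e).+1 = d by lia.
have -> : (i + 2 * e).+1 - i = (2 * e).+1 by lia.
have -> : (i + 2 * e).+1 - 1 = i + 2 * e by lia.
have -> : 2 * (i + e) - i = i + 2 * e by lia.
nia.
Qed.

Section ErdosGallai.

Variable n : nat.
Implicit Type R : rel 'I_n.

Definition compressed R := forall i j y : 'I_n, i < j -> y != i -> y != j -> R j y -> R i y.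

(* The pairs [{i, 2s+1-i}], [i <= s], cannot all be edges: they would form a matching. *)
Lemma pair_nonedge R s : 2 * s + 2 <= n -> (forall f, ~ rmatching R s.+1 f) ->
  exists2 i, i <= s & exists a b : 'I_n, [/\ val a = i, val b = 2 * s + 1 - i & ~~ R a b].
Proof.
move=> ns nomatch; have n_gt0 : 0 < n by lia.
pose v0 : 'I_n := Ordinal n_gt0.
pose f p (b : bool) : 'I_n := insubd v0 (if b then 2 * s + 1 - p else p).
have valf p b : p <= s -> val (f p b) = if b then 2 * s + 1 - p else p.
  by move=> ps; rewrite val_insubd; case: b; rewrite ifT //; lia.
case: (boolP [exists i : 'I_s.+1, ~~ R (f i false) (f i true)]) => [/existsP [i nR]|].
  exists i; first by rewrite -ltnS.
  by exists (f i false), (f i true); rewrite !valf // -ltnS.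
rewrite negb_exists => /forallP allR; case: (nomatch f); split => [p q b b' ps qs|p ps].
  by move/(congr1 val); rewrite !valf // -?ltnS //; case: b; case: b' => /=; lia.
by have := allR (Ordinal ps); rewrite negbK.
Qed.

Section Compressed.

Variable R : rel 'I_n.
Hypotheses (symR : symmetric R) (irrR : irreflexive R) (compR : compressed R).

(* Compression pushes every edge [xy] with [x >= a] and [y >= b] down to [ab]. *)
Lemma compressed_no_cross (a b : 'I_n) x y :
  a < b -> ~~ R a b -> R x y -> a <= x -> b <= y -> False.
Proof.
move=> ab nRab Rxy ax biy.
have ay : a < y := leq_trans ab biy.
have Ray : R a y.
  have [xa|xa] := eqVneq x a; first by rewrite -xa.
  apply: (compR (j := x)) => //; first by rewrite ltn_neqAle eq_sym xa ax.
    by rewrite neq_ltn ay orbT.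
  by apply: contraTneq Rxy => ->; rewrite irrR.
have [yb|yb] := eqVneq y b; first by rewrite -yb Ray in nRab.
have : R b a.
  apply: (compR (j := y)); rewrite // 1?neq_ltn ?ab ?orbT //.
  - by rewrite ltn_neqAle eq_sym yb biy.
  - by rewrite ay.
  - by rewrite symR.
by rewrite symR (negPf nRab).
Qed.

Lemma compressed_deg_le (a b : 'I_n) x : a < b -> ~~ R a b ->
  deg R x <= (if x < a then n - 1 else if x < b then b - 1 else a).
Proof.
move=> ab nRab; have bn : b <= n := ltnW (ltn_ord b).
case: ifP => xa.
  have := @deg_le_sum _ R xpredT x irrR (fun _ _ => erefl).
  by rewrite sum_nat_const card_ord muln1 /=; lia.
have ax : a <= x by rewrite leqNgt xa.
case: ifP => xb.
  have : deg R x + (x < b) <= b.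
    rewrite -[leqRHS](sum_ord_lt bn).
    apply (@deg_le_sum _ R (fun y : 'I_n => y < b) x irrR) => y Rxy.
    by rewrite ltnNge; apply/negP => /(compressed_no_cross ab nRab Rxy ax).
  by rewrite xb; lia.
have : deg R x + (x < a) <= a.
  rewrite -[leqRHS](sum_ord_lt (leq_trans (ltnW ab) bn)).
  apply (@deg_le_sum _ R (fun y : 'I_n => y < a) x irrR) => y Rxy.
  rewrite ltnNge; apply/negP => ay; rewrite symR in Rxy.
  by apply: (compressed_no_cross ab nRab Rxy ay); rewrite leqNgt xb.
by rewrite xa addn0.
Qed.

Lemma erdos_gallai_compressed s : 2 * s + 2 <= n -> (forall f, ~ rmatching R s.+1 f) ->
  exists2 i, i <= s & \sum_x deg R x <= eg_bound n s i.
Proof.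
move=> ns nomatch; have [i le_is [a [b [va vb nRab]]]] := pair_nonedge ns nomatch.
have ab : a < b by rewrite va vb; lia.
exists i => //; have bn : b <= n := ltnW (ltn_ord b).
rewrite eg_boundE -?vb // -va -sum_ord_piecewise ?(ltnW ab) //.
exact: leq_sum (fun x _ => compressed_deg_le x ab nRab).
Qed.

End Compressed.

(* Induction on the potential [\sum_x x * deg R x], which every proper
   compression towards a smaller vertex decreases. *)
Theorem erdos_gallai R s : 2 * s + 2 <= n -> symmetric R -> irreflexive R ->
    (forall f, ~ rmatching R s.+1 f) ->
  exists2 i, i <= s & \sum_x deg R x <= eg_bound n s i.
Proof.
move=> ns; have [c] := ubnP (\sum_(x : 'I_n) x * deg R x).
elim: c R => [//|c IH] R; rewrite ltnS => pot_le symR irrR nomatch.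
case: (boolP [exists i : 'I_n, exists j : 'I_n, exists y : 'I_n,
               [&& i < j, y != i, y != j, R j y & ~~ R i y]]).
  case/existsP => i /existsP [j /existsP [y /and5P [ij yi yj Rjy Riy]]].
  have nij : i != j by rewrite neq_ltn ij.
  have [||||i0 le_i0s bound] := IH (compress R i j).
  - exact: leq_trans (compress_weighted_deg nij (c := val) ij yi yj Rjy Riy) pot_le.
  - exact: compress_sym.
  - exact: compress_irr.
  - by move=> f /(rmatching_compress nij irrR) [] /nomatch.
  by exists i0; rewrite // -(compress_deg_sum R nij).
rewrite negb_exists => /forallP nocomp.
apply: erdos_gallai_compressed => // i j y ij yi yj Rjy; apply/negPn/negP => Riy.
by move: (nocomp i) => /existsPn /(_ j) /existsPn /(_ y); rewrite ij yi yj Rjy Riy.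
Qed.

End ErdosGallai.

Lemma leq_bigD1_const (T : finType) (U : {set T}) x (F : T -> nat) c : x \in U ->
  (forall y, y \in U -> y != x -> c <= F y) -> F x + c * (#|U| - 1) <= \sum_(y in U) F y.
Proof.
move=> xU Fc; rewrite (bigD1 x) //= leq_add2l.
have -> : #|U| - 1 = #|[predD1 U & x]| by rewrite (cardD1 x U) xU add1n subn1.
rewrite mulnC -sum_nat_const (eq_bigl (fun y => (y \in U) && (y != x))) => [|y]; last first.
  by rewrite !inE andbC.
by apply: leq_sum => y /andP [yU yx]; exact: Fc.
Qed.

(* Summing [2 <= g x + h y] over the ordered pairs of distinct elements of [U]. *)
Lemma sum_pair_avg (T : finType) (U : {set T}) (g h : T -> nat) : 1 < #|U| ->
    (forall x y, x \in U -> y \in U -> x != y -> 2 <= g x + h y) ->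
  2 * #|U| <= \sum_(x in U) (g x + h x).
Proof.
move=> U_gt1 gh2.
have sum_gh : \sum_(x in U) \sum_(y in U) (g x + h y) = #|U| * \sum_(x in U) (g x + h x).
  under eq_bigr => x _ do rewrite big_split /= sum_nat_const.
  by rewrite big_split /= -big_distrr /= sum_nat_const [in RHS]big_split mulnDr.
have : \sum_(x in U) ((g x + h x) + 2 * (#|U| - 1)) <= \sum_(x in U) \sum_(y in U) (g x + h y).
  apply: leq_sum => x xU; apply: (leq_bigD1_const (F := fun y => g x + h y)) => // y yU yx.
  by apply: gh2; rewrite // eq_sym.
rewrite big_split /= sum_nat_const sum_gh; set S := \sum_(x in U) _ => le_S.
suff : (#|U| - 1) * (2 * #|U|) <= (#|U| - 1) * S by rewrite leq_pmul2l ?subn_gt0.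
nia.
Qed.

Section WeightCount.

Variables (T : finType) (w : T -> T -> nat) (t : nat) (f : nat -> bool -> T).
Hypotheses (w_sym : forall x y, w x y = w y x) (inj_f : pairing_inj t f).

Local Notation U := (~: covered t f).

Lemma sum_setC_covered (F : T -> nat) :
  \sum_x F x = \sum_(x in U) F x + \sum_(x in covered t f) F x.
Proof.
rewrite addnC (bigID (mem (covered t f))) /=.
by congr (_ + _); apply: eq_bigl => x; rewrite inE.
Qed.

(* Each unmatched vertex sends weight [>= 2] to every other unmatched vertex
   and, on average, weight [>= 1] to every matched one. *)
Lemma weight_count : 1 < #|U| ->
    (forall u v, u \in U -> v \in U -> u != v -> 2 <= w u v) ->
    (forall u v p, u \in U -> v \in U -> u != v -> p < t ->
       2 <= w u (f p false) + w v (f p true)) ->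
  2 * #|U| * (#|T| - 1) <= \sum_x \sum_y w x y.
Proof.
move=> U_gt1 wUU wUc.
have cardU : #|U| + 2 * t = #|T| by rewrite -(card_covered inj_f) addnC cardsC.
have inner : 2 * (#|U| * (#|U| - 1)) <= \sum_(x in U) \sum_(y in U) w x y.
  rewrite mulnCA -sum_nat_const; apply: leq_sum => x xU.
  apply: leq_trans (leq_bigD1_const (F := w x) (c := 2) xU _); first exact: leq_addl.
  by move=> y yU yx; apply: wUU; rewrite // eq_sym.
have cross : t * (2 * #|U|) <= \sum_(x in U) \sum_(y in covered t f) w x y.
  under eq_bigr => x _ do rewrite sum_covered //.
  rewrite exchange_big /= -[t in t * _]card_ord -sum_nat_const; apply: leq_sum => p _.
  by apply: sum_pair_avg => // x y xU yU xy; exact: wUc xU yU xy (ltn_ord p).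
have rowsU : \sum_(x in U) \sum_y w x y =
    \sum_(x in U) \sum_(y in U) w x y + \sum_(x in U) \sum_(y in covered t f) w x y.
  by rewrite -big_split; apply: eq_bigr => x _; exact: sum_setC_covered.
have rowsC : \sum_(x in U) \sum_(y in covered t f) w x y <= \sum_(y in covered t f) \sum_x w y x.
  rewrite exchange_big; apply: leq_sum => y _; rewrite (sum_setC_covered (w y)).
  by under eq_bigr => x _ do rewrite w_sym; exact: leq_addr.
rewrite (sum_setC_covered (fun x => \sum_y w x y)) rowsU -cardU.
have -> : 2 * #|U| * (#|U| + 2 * t - 1) = 2 * (#|U| * (#|U| - 1)) + 2 * (t * (2 * #|U|)).
  by rewrite -!mulnA -mulnDr; congr (_ * _); nia.
lia.
Qed.

End WeightCount.

Definition pair_rel n (E : {set {set 'I_n}}) : rel 'I_n := fun x y => [set x; y] \in E.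

Lemma pair_rel_sym n (E : {set {set 'I_n}}) : symmetric (pair_rel E).
Proof. by move=> x y; rewrite /pair_rel setUC. Qed.

Lemma pair_rel_irr n (E : {set {set 'I_n}}) : E \subset Kedges n -> irreflexive (pair_rel E).
Proof.
by move=> EK x; apply/negP => /(subsetP EK); rewrite /pair_rel setUid inE cards1.
Qed.

Lemma card_increasing_pairs n (E : {set {set 'I_n}}) :
  #|[set p : 'I_n * 'I_n | (p.1 < p.2) && pair_rel E p.1 p.2]| <= #|E|.
Proof.
rewrite -(card_in_imset (f := fun p : 'I_n * 'I_n => [set p.1; p.2])).
  by apply: subset_leq_card; apply/subsetP => e /imsetP [p]; rewrite inE => /andP [_ pE] ->.
move=> [a b] [c d]; rewrite !inE /= => /andP [ab _] /andP [cd _] e_ab.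
have ac : a \in [set c; d] by rewrite -e_ab set21.
have bd : b \in [set c; d] by rewrite -e_ab set22.
have ca : c \in [set a; b] by rewrite e_ab set21.
move: ac bd ca; rewrite !inE -!val_eqE /= => ac bd ca.
have [ac' bd'] : nat_of_ord a = c /\ nat_of_ord b = d by lia.
by congr (_, _); apply: val_inj.
Qed.

Lemma deg_sum_pair_rel_le n (E : {set {set 'I_n}}) : E \subset Kedges n ->
  \sum_x deg (pair_rel E) x <= 2 * #|E|.
Proof.
move=> EK; set lt_pair := fun x y : 'I_n => (x < y) && pair_rel E x y.
have split_xy x y : pair_rel E x y = lt_pair x y + lt_pair y x :> nat.
  rewrite /lt_pair (pair_rel_sym E y x).
  by case: (ltngtP x y) => [_|_|/val_inj ->]; rewrite ?addn0 ?ltnn ?pair_rel_irr.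
rewrite /deg; under eq_bigr => x _ do under eq_bigr => y _ do rewrite split_xy.
under eq_bigr => x _ do rewrite big_split /=.
rewrite big_split /= [X in _ + X]exchange_big /= addnn -mul2n leq_pmul2l //.
rewrite pair_big /=; apply: leq_trans (card_increasing_pairs E).
by rewrite -sum1dep_card [leqRHS]big_mkcond; apply: leq_sum => p _; rewrite /lt_pair; case: ifP.
Qed.

Lemma pairing_matching n t (f : nat -> bool -> 'I_n) : pairing_inj t f ->
  is_matching [set pair_edge f p | p : 'I_t] /\ #|[set pair_edge f p | p : 'I_t]| = t.
Proof.
move=> inj_f; have disj (p q : 'I_t) : p != q -> [disjoint pair_edge f p & pair_edge f q].
  by move=> pq; apply: pair_edge_disjoint (ltn_ord p) (ltn_ord q) _.
split; last first.
  rewrite card_imset ?card_ord // => p q epq; apply/eqP/negPn/negP => /disj.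
  by rewrite -epq -setI_eq0 setIid -cards_eq0 (card_pair_edge inj_f (ltn_ord p)).
split.
  by apply/subsetP => _ /imsetP [p _ ->]; rewrite inE (card_pair_edge inj_f (ltn_ord p)).
move=> _ _ /imsetP [p _ ->] /imsetP [q _ ->] epq; apply: disj.
by apply: contraNneq epq => ->.
Qed.

Section Partition.

Variables (n : nat) (E0 E1 E2 : {set {set 'I_n}}).
Hypothesis partE : ordered_partition E0 E1 E2.

Lemma partition_Kedges :
  [/\ E0 \subset Kedges n, E1 \subset Kedges n & E2 \subset Kedges n].
Proof. by case: partE => _ _ _ <-; split; apply/subsetP => e he; rewrite !inE he ?orbT. Qed.

Lemma pair_rel_partition x y :
  pair_rel E0 x y + pair_rel E1 x y + pair_rel E2 x y = (x != y).
Proof.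
case: partE => d01 d02 d12 cover; rewrite /pair_rel.
have -> : (x != y) = ([set x; y] \in E0 :|: E1 :|: E2).
  by rewrite cover /Kedges inE cards2; case: (x != y).
rewrite !inE; case e0: ([set x; y] \in E0).
  by rewrite (disjointFr d01 e0) (disjointFr d02 e0).
by case e1: ([set x; y] \in E1); rewrite ?(disjointFr d12 e1).
Qed.

Lemma deg_sum_partition :
  \sum_x deg (pair_rel E0) x + \sum_x deg (pair_rel E1) x + \sum_x deg (pair_rel E2) x =
  n * (n - 1).
Proof.
rewrite /deg -!big_split /= -[n in n * _]card_ord -sum_nat_const; apply: eq_bigr => x _.
rewrite -!big_split /= (bigD1 x) //= pair_rel_partition eqxx add0n.
rewrite (eq_bigr (fun _ => 1)) => [|y yx]; last by rewrite pair_rel_partition eq_sym yx.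
by rewrite sum1_card cardC1 card_ord subn1.
Qed.

Definition weight x y : nat := pair_rel E1 x y + 2 * pair_rel E2 x y.

Lemma weight_sym x y : weight x y = weight y x.
Proof. by rewrite /weight !(pair_rel_sym _ x y). Qed.

Lemma weight_sum :
  \sum_x \sum_y weight x y = \sum_x deg (pair_rel E1) x + 2 * \sum_x deg (pair_rel E2) x.
Proof.
rewrite big_distrr -big_split /=; apply: eq_bigr => x _.
by rewrite /deg big_distrr -big_split.
Qed.

Lemma weight0_E0 x y : x != y -> weight x y = 0 -> [set x; y] \in E0.
Proof.
move=> xy; have := pair_rel_partition x y; rewrite xy /weight /pair_rel.
by case: ([set x; y] \in E0); case: ([set x; y] \in E1); case: ([set x; y] \in E2).
Qed.

Lemma weight_le1_notE2 x y : weight x y <= 1 -> [set x; y] \notin E2.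
Proof. by rewrite /weight /pair_rel; case: ([set x; y] \in E2); rewrite ?muln1 ?addn2. Qed.

Definition good_pairing t f := pairing_inj t f /\
  exists p0, pair_edge f p0 \notin E2 /\ forall p, p < t -> p != p0 -> pair_edge f p \in E0.

Lemma good_pairing_matching t f : good_pairing t f ->
  exists M, good_matching E1 E2 M /\ #|M| = t.
Proof.
case=> inj_f [p0 [p0E2 E0f]]; case: partE => d01 d02 _ _.
have [matchM cardM] := pairing_matching inj_f.
exists [set pair_edge f p | p : 'I_t]; split => //; split => //; split.
  apply/setP => e; rewrite !inE; apply/negP => /andP [/imsetP [p _ ->] pE2].
  have [pp0|pp0] := eqVneq (val p) p0; first by rewrite -pp0 pE2 in p0E2.
  by rewrite (disjointFr d02 (E0f p (ltn_ord p) pp0)) in pE2.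
rewrite -(cards1 (pair_edge f p0)); apply/subset_leq_card/subsetP => e.
rewrite !inE => /andP [/imsetP [p _ ->] pE1]; apply/eqP; congr pair_edge.
apply/eqP/negPn/negP => pp0.
by rewrite (disjointFr d01 (E0f p (ltn_ord p) pp0)) in pE1.
Qed.

Section MaximalMatching.

Variables (t : nat) (f : nat -> bool -> 'I_n).
Hypotheses (match_f : rmatching (pair_rel E0) t f) (no_good : forall g, ~ good_pairing t.+1 g).

Local Notation U := (~: covered t f).

Lemma unmatched_pair_E2 u v : u \in U -> v \in U -> u != v -> [set u; v] \in E2.
Proof.
rewrite !inE => uU vU uv; apply/negPn/negP => uvE2; have [inj_f E0_f] := match_f.
apply: (no_good (g := extend f t u v)); split.
  by apply: pairing_inj_extend => //; apply: notin_covered.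
exists t; rewrite pair_edge_extend eqxx; split => // q; rewrite ltnS pair_edge_extend => qt qnt.
by rewrite (negPf qnt); apply: E0_f; rewrite ltn_neqAle qnt.
Qed.

(* Otherwise replacing the [p]-th pair [{a, b}] by [{a, u}] and [{b, v}] would give
   a good pairing. *)
Lemma unmatched_cross_weight u v p : u \in U -> v \in U -> u != v -> p < t ->
  2 <= weight u (f p false) + weight v (f p true).
Proof.
rewrite !inE => uU vU uv pt; rewrite leqNgt; apply/negP => lt2; have [inj_f E0_f] := match_f.
have fu := notin_covered uU; have fv := notin_covered vU.
set a := f p false in lt2 *; set b := f p true in lt2 *.
pose g := extend (update f p u) t b v.
have inj_g : pairing_inj t.+1 g.
  apply: pairing_inj_extend; first exact: pairing_inj_update.
  - move=> q s qt; rewrite /update; case: ifP => [_|nq]; first by rewrite eq_sym fu.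
    apply: contraFneq nq => /(inj_f _ _ _ _ qt pt) [-> ->]; by rewrite eqxx.
  - by move=> q s qt; rewrite /update; case: ifP => _; [exact: uv | exact: fv].
  - exact: fv.
have edge_g q : pair_edge g q =
    if q == t then [set b; v] else if q == p then [set a; u] else pair_edge f q.
  by rewrite pair_edge_extend pair_edge_update.
have E0_g q : q < t.+1 -> q != t -> q != p -> pair_edge g q \in E0.
  by move=> qt qnt qnp; rewrite edge_g (negPf qnt) (negPf qnp); apply: E0_f; rewrite ltn_neqAle qnt.
have pnt : p != t by rewrite neq_ltn pt.
have [wa0|wb0] : weight u a = 0 \/ weight v b = 0 by lia.
- apply: (no_good (g := g)); split => //; exists t; rewrite edge_g eqxx setUC.
  split; first by apply: weight_le1_notE2; lia.
  move=> q qt qnt; have [->|] := eqVneq q p; last exact: E0_g.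
  by rewrite edge_g (negPf pnt) eqxx setUC weight0_E0 // eq_sym fu.
- apply: (no_good (g := g)); split => //; exists p; rewrite edge_g (negPf pnt) eqxx setUC.
  split; first by apply: weight_le1_notE2; lia.
  move=> q qt qnp; have [->|] := eqVneq q t; last by move=> qnt; exact: E0_g.
  by rewrite edge_g eqxx setUC weight0_E0 // eq_sym fv.
Qed.

Lemma weight_ge_of_matching : 2 * t + 2 <= n ->
  2 * (n - 2 * t) * (n - 1) <= \sum_x \sum_y weight x y.
Proof.
move=> tn; have [inj_f _] := match_f.
have cardU : #|U| = n - 2 * t.
  by have := cardsC (covered t f); rewrite card_covered // card_ord; lia.
rewrite -cardU -[n in n - 1]card_ord; apply: weight_count => //.
- exact: weight_sym.
- by rewrite cardU; lia.
- move=> u v uU vU uv; rewrite /weight /pair_rel unmatched_pair_E2 //; lia.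
- by move=> u v q uU vU uv qt; apply: unmatched_cross_weight.
Qed.

End MaximalMatching.

End Partition.

Lemma eg_bound_le r k i : 1 < r -> r < k -> i <= r - 2 ->
  (2 * k + 7 <= 3 * r ->
    (k + 3 * r - 4) * (k - r + 3) + eg_bound (r + k) (r - 2) i <= (r + k) * (r + k - 1)) /\
  (3 * r < 2 * k + 7 ->
    (k + 1) * (k + 2) + eg_bound (r + k) (r - 2) i <= (r + k) * (r + k - 1)).
Proof.
move=> r_gt1 rk ir.
have [j rE] : exists j, r = i + j + 2 by exists (r - 2 - i); lia.
have [e kE] : exists e, k = i + j + 3 + e by exists (k - r - 1); lia.
subst r k; rewrite /eg_bound.
have -> : 2 * (i + j + 2 - 2) + 1 - i = i + 2 * j + 1 by lia.
have -> : 2 * (i + j + 2 - 2) - i = i + 2 * j by lia.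
have -> : i + j + 2 + (i + j + 3 + e) - (i + 2 * j + 1) = i + 4 + e by lia.
have -> : i + j + 2 + (i + j + 3 + e) = 2 * (i + j) + 5 + e by lia.
have -> : 2 * (i + j) + 5 + e - 1 = 2 * (i + j) + 4 + e by lia.
have -> : i + j + 3 + e + 3 * (i + j + 2) - 4 = 4 * (i + j) + 5 + e by lia.
have -> : i + j + 3 + e - (i + j + 2) + 3 = e + 4 by lia.
by split=> regime; nia.
Qed.

Lemma no_good_matching_bound r k (E0 E1 E2 : {set {set 'I_(r + k)}}) :
    0 < r -> r < k -> ordered_partition E0 E1 E2 ->
    ~ (exists M, good_matching E1 E2 M /\ #|M| = r) ->
  (k - r + 2) * (k + r - 1) <= #|E1| + 2 * #|E2| \/
  1 < r /\ exists2 i, i <= r - 2 &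
    (r + k) * (r + k - 1) <= 2 * (#|E1| + 2 * #|E2|) + eg_bound (r + k) (r - 2) i.
Proof.
move=> r_gt0 rk partE no_match.
have no_good t g : t = r -> ~ good_pairing E0 E2 t g.
  by move=> -> /(good_pairing_matching partE).
have [K0 K1 K2] := partition_Kedges partE.
have D1 := deg_sum_pair_rel_le K1; have D2 := deg_sum_pair_rel_le K2.
have Dsum := deg_sum_partition partE.
case: (classic (exists f, rmatching (pair_rel E0) (r - 1) f)) => [[f match_f]|no_match0].
  left; have r_eq : (r - 1).+1 = r by lia.
  have := weight_ge_of_matching partE match_f (fun g => no_good _ g r_eq).
  have -> : r + k - 2 * (r - 1) = k - r + 2 by lia.
  have -> : r + k - 1 = k + r - 1 by lia.
  rewrite weight_sum -mulnA; set P := _ * _; lia.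
have r_gt1 : 1 < r.
  rewrite ltn_neqAle r_gt0 andbT; apply/eqP => r1; apply: no_match0.
  have v0 : 'I_(r + k) by apply: (@Ordinal _ 0); lia.
  have r1_0 : r - 1 = 0 by rewrite -r1.
  by exists (fun _ _ => v0); split => [p q s s'|p]; rewrite r1_0.
right; split => //.
have [||||i le_ir bound] := @erdos_gallai _ (pair_rel E0) (r - 2).
- lia.
- exact: pair_rel_sym.
- exact: pair_rel_irr.
- have -> : (r - 2).+1 = r - 1 by lia.
  by move=> f match_f; apply: no_match0; exists f.
by exists i => //; lia.
Qed.

Theorem lemma16 (r k : nat) (E0 E1 E2 : {set {set 'I_(r + k)}}) :
  0 < r -> r < k ->
  ordered_partition E0 E1 E2 ->
  ((2 * k + 7 <= 3 * r ->
    2 * (#|E1| + 2 * #|E2|) < (k + 3 * r - 4) * (k - r + 3) ->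
    #|E1| + 2 * #|E2| < (k - r + 2) * (k + r - 1) ->
    exists M, good_matching E1 E2 M /\ #|M| = r)
  /\
   (3 * r < 2 * k + 7 ->
    2 * (#|E1| + 2 * #|E2|) < (k + 1) * (k + 2) ->
    #|E1| + 2 * #|E2| < (k - r + 2) * (k + r - 1) ->
    exists M, good_matching E1 E2 M /\ #|M| = r)).
Proof.
move=> r_gt0 rk partE.
split=> regime W_lt W_lt'; apply: NNPP => no_match.
all: case: (no_good_matching_bound r_gt0 rk partE no_match) => [|[r_gt1 [i le_ir bound]]].
all: try by rewrite leqNgt W_lt'.
all: have [small large] := eg_bound_le r_gt1 rk le_ir.
- by have := small regime; lia.
- by have := large regime; lia.
Qed.
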